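(* Let $(X,d)$ be a compact metric space and $\emptyset\ne F\subseteq X$ with a representation $(\tilde F_k)_{k\in\mathbb{N}}$ such that $F$ is explicitly closed (w.r.t. this representation). Let $(x_n)$ be a sequence in $X$ that has approximate $F$-points. Then the set $\{x_n\mid n\in\mathbb{N}\}$ has an adherent point (a point of its closure) $x\in F$.
   Context: A representation of $F$ is a family $(\tilde F_k)_{k\in\mathbb{N}}$ of subsets of $X$ with $F=\bigcap_{k\in\mathbb{N}}\tilde F_k$; one sets $AF_k:=\bigcap_{l\le k}\tilde F_l$. $(x_n)$ has approximate $F$-points if for every $k\in\mathbb{N}$ there is $N\in\mathbb{N}$ with $x_N\in AF_k$. $F$ is explicitly closed if for every $p\in X$: if $AF_M\cap \overline{B}(p,1/(N+1))\neq\emptyset$ for all $N,M\in\mathbb{N}$, then $p\in F$ (here $\overline B$ is the closed ball). *)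

From Stdlib Require Import Reals List.
Open Scope R_scope.

Definition is_metric {X : Type} (d : X -> X -> R) : Prop :=
  (forall x y, 0 <= d x y) /\
  (forall x y, d x y = 0 <-> x = y) /\
  (forall x y, d x y = d y x) /\
  (forall x y z, d x z <= d x y + d y z).

Definition d_open {X : Type} (d : X -> X -> R) (U : X -> Prop) : Prop :=
  forall x, U x -> exists e, 0 < e /\ forall y, d x y < e -> U y.

Definition d_compact {X : Type} (d : X -> X -> R) : Prop :=
  forall (I : Type) (U : I -> X -> Prop),
    (forall i, d_open d (U i)) -> (forall x, exists i, U i x) ->
    exists l : list I, forall x, exists i, In i l /\ U i x.

Definition adherent {X : Type} (d : X -> X -> R) (S : X -> Prop) (x : X) : Prop :=
  forall e, 0 < e -> exists y, S y /\ d x y < e.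

Definition representation {X : Type} (F : X -> Prop) (Ft : nat -> X -> Prop) : Prop :=
  forall x, F x <-> (forall k, Ft k x).

Definition AF {X : Type} (Ft : nat -> X -> Prop) (k : nat) (x : X) : Prop :=
  forall l, (l <= k)%nat -> Ft l x.

Definition has_approx_F_points {X : Type} (Ft : nat -> X -> Prop) (xs : nat -> X) : Prop :=
  forall k, exists N, AF Ft k (xs N).

Definition cball {X : Type} (d : X -> X -> R) (p : X) (r : R) (y : X) : Prop :=
  d p y <= r.

Definition explicitly_closed {X : Type} (d : X -> X -> R)
    (F : X -> Prop) (Ft : nat -> X -> Prop) : Prop :=
  forall p,
    (forall N M : nat, exists y, AF Ft M y /\ cball d p (1 / (INR N + 1)) y) ->
    F p.

From Stdlib Require Import Reals List Lra Lia Classical.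
Open Scope R_scope.

(* The sets A_K := {x_n | x_n ∈ AF_K} are nonempty and decrease in K. By
   compactness some point p is adherent to every A_K: otherwise each point has
   a ball missing some A_K, finitely many such balls cover X, and the A_K with
   the largest K among them, being nonempty, meets one of the balls. Such a p
   meets every AF_M within every radius 1/(N+1), so it lies in F since F is
   explicitly closed; adherence to A_0 makes it adherent to {x_n}. *)

Lemma AF_antitone {X : Type} (Ft : nat -> X -> Prop) (K K' : nat) (x : X) :
  (K <= K')%nat -> AF Ft K' x -> AF Ft K x.
Proof. intros HK HA l Hl. apply HA. lia. Qed.

Lemma list_bounded {I : Type} (f : I -> nat) (l : list I) :
  exists m, forall i, In i l -> (f i <= m)%nat.
Proof.
  exists (list_max (map f l)). intros i Hi.
  assert (Hle : Forall (fun k => (k <= list_max (map f l))%nat) (map f l))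
    by (apply list_max_le; lia).
  rewrite Forall_forall in Hle. apply Hle, in_map, Hi.
Qed.

Section CompactMetric.

Variables (X : Type) (d : X -> X -> R).
Hypothesis d_refl : forall x, d x x = 0.
Hypothesis d_triangle : forall x y z, d x z <= d x y + d y z.

Lemma d_open_ball_and (p : X) (e : R) (Q : Prop) :
  d_open d (fun y => d p y < e /\ Q).
Proof.
  intros x [Hx HQ]. exists (e - d p x). split; [lra |].
  intros y Hy. split; [| exact HQ].
  pose proof (d_triangle p x y). lra.
Qed.

Lemma compact_adherent_antitone (A : nat -> X -> Prop) :
  d_compact d ->
  (forall K K' y, (K <= K')%nat -> A K' y -> A K y) ->
  (forall K, exists y, A K y) ->
  exists p, forall K, adherent d (A K) p.
Proof.
  intros Hc HA Hne. apply NNPP. intros Hno.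
  set (U := fun (i : X * R * nat) y =>
    let '(p, e, K) := i in d p y < e /\ forall z, A K z -> e <= d p z).
  destruct (Hc _ U) as [l Hl].
  - intros [[p e] K]. apply d_open_ball_and.
  - intros x.
    assert (Hx : exists K e, 0 < e /\ forall z, A K z -> e <= d x z).
    { apply NNPP. intros Hx. apply Hno. exists x. intros K e He.
      apply NNPP. intros Hz. apply Hx. exists K, e. split; [exact He |].
      intros z Hz'. apply Rnot_lt_le. intros Hlt. apply Hz. now exists z. }
    destruct Hx as [K [e [He Hfar]]].
    exists (x, e, K). simpl. rewrite d_refl. now split.
  - destruct (list_bounded (fun i : X * R * nat => snd i) l) as [m Hm].
    destruct (Hne m) as [y Hy].
    destruct (Hl y) as [[[p e] K] [Hin [Hd Hfar]]].
    specialize (Hm _ Hin). simpl in Hm.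
    specialize (Hfar y (HA K m y Hm Hy)). lra.
Qed.

End CompactMetric.

Theorem lemma3p6 (X : Type) (d : X -> X -> R)
  (F : X -> Prop) (Ft : nat -> X -> Prop) (xs : nat -> X) :
  is_metric d -> d_compact d ->
  (exists x0, F x0) ->
  representation F Ft ->
  explicitly_closed d F Ft ->
  has_approx_F_points Ft xs ->
  exists x, F x /\ adherent d (fun y => exists n, y = xs n) x.
Proof.
  intros [_ [Hzero [_ Htri]]] Hc _ _ Hec Hap.
  set (A := fun K y => exists n, y = xs n /\ AF Ft K (xs n)).
  destruct (compact_adherent_antitone X d (fun x => proj2 (Hzero x x) eq_refl)
              Htri A Hc) as [p Hp].
  - intros K K' y HK [n [-> Hn]]. exists n. split; [reflexivity |].
    exact (AF_antitone Ft K K' _ HK Hn).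
  - intros K. destruct (Hap K) as [n Hn]. now exists (xs n), n.
  - exists p. split.
    + apply Hec. intros N M.
      assert (HN : 0 < 1 / (INR N + 1)).
      { apply Rdiv_lt_0_compat; [lra |]. pose proof (pos_INR N). lra. }
      destruct (Hp M _ HN) as [y [[n [-> Hn]] Hd]].
      exists (xs n). split; [exact Hn |]. unfold cball. lra.
    + intros e He. destruct (Hp 0%nat e He) as [y [[n [-> _]] Hd]].
      exists (xs n). split; [now exists n | exact Hd].
Qed.
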